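(* For a prime $N\ge3$, \[ \frac1{N-1}\sum_{w=1}^{N-1}\frac1N\sum_{h=1}^{N-1}\frac{|\cot(\pi hw/N)|}{h}\le\frac{H_{N-1}(1)}{N}\,\frac6\pi\log(N). \]
   Context: $H_n(1)=\sum_{h=1}^n h^{-1}$ is the $n$-th harmonic number; $\log$ is the natural logarithm. *)

From Stdlib Require Import Reals Lra Lia Znumtheory.
Open Scope R_scope.

Fixpoint sum1 (n : nat) (f : nat -> R) : R :=
  match n with
  | O => 0
  | S m => sum1 m f + f (S m)
  end.

Definition cot (x : R) : R := cos x / sin x.

Definition harmonic (n : nat) : R := sum1 n (fun h => / INR h).

From Stdlib Require Import Reals Znumtheory.
From Stdlib Require Import Lra Lia List Permutation.
Open Scope R_scope.

(* Since N is prime, w |-> h w mod N permutes {1, ..., N-1} for every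
   1 <= h < N, and cot is PI-periodic, so the inner sum over w does not
   depend on h: it equals S = sum_r |cot (PI r / N)|, and the left-hand side
   is S H_{N-1} / (N (N-1)).  The bound |cot x| <= 1/x + 1/(PI - x) on
   (0, PI) gives S <= (2 N / PI) H_{N-1}, and the theorem reduces to
   N H_{N-1} <= 3 (N-1) ln N, which follows from H_{N-1} <= 1 + ln N and
   ln N >= 1. *)

Lemma sum1_ext n f g :
  (forall k, (1 <= k <= n)%nat -> f k = g k) -> sum1 n f = sum1 n g.
Proof.
  induction n as [|n IH]; intros Hfg; simpl; [reflexivity|].
  rewrite IH, Hfg; [reflexivity|lia|intros k Hk; apply Hfg; lia].
Qed.

Lemma sum1_le n f g :
  (forall k, (1 <= k <= n)%nat -> f k <= g k) -> sum1 n f <= sum1 n g.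
Proof.
  induction n as [|n IH]; intros Hfg; simpl; [lra|].
  apply Rplus_le_compat; [apply IH; intros k Hk|]; apply Hfg; lia.
Qed.

Lemma sum1_scal_l n c f : sum1 n (fun k => c * f k) = c * sum1 n f.
Proof. induction n as [|n IH]; simpl; [|rewrite IH]; ring. Qed.

Lemma sum1_add n f g : sum1 n (fun k => f k + g k) = sum1 n f + sum1 n g.
Proof. induction n as [|n IH]; simpl; [|rewrite IH]; ring. Qed.

Lemma sum1_comm n m F :
  sum1 n (fun w => sum1 m (fun h => F h w)) = sum1 m (fun h => sum1 n (fun w => F h w)).
Proof.
  induction n as [|n IH]; simpl.
  - induction m as [|m IHm]; simpl; [|rewrite <- IHm]; ring.
  - rewrite IH, <- sum1_add. reflexivity.
Qed.

Definition sum_list (f : nat -> R) (l : list nat) : R :=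
  fold_right (fun k s => f k + s) 0 l.

Lemma sum_list_app f l1 l2 : sum_list f (l1 ++ l2) = sum_list f l1 + sum_list f l2.
Proof. induction l1 as [|k l1 IH]; simpl; [|rewrite IH]; ring. Qed.

Lemma sum_list_perm f l1 l2 : Permutation l1 l2 -> sum_list f l1 = sum_list f l2.
Proof. induction 1; simpl in *; lra. Qed.

Lemma sum_list_map f g l : sum_list f (map g l) = sum_list (fun k => f (g k)) l.
Proof. induction l as [|k l IH]; simpl; [|rewrite IH]; reflexivity. Qed.

Lemma sum1_sum_list n f : sum1 n f = sum_list f (seq 1 n).
Proof.
  induction n as [|n IH]; [reflexivity|].
  rewrite seq_S, sum_list_app, <- IH. simpl.
  replace (1 + n)%nat with (S n) by lia. ring.
Qed.

Lemma sum1_reindex n (g : nat -> nat) f :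
  (forall k, (1 <= k <= n)%nat -> (1 <= g k <= n)%nat) ->
  (forall a b, (1 <= a <= n)%nat -> (1 <= b <= n)%nat -> g a = g b -> a = b) ->
  sum1 n (fun k => f (g k)) = sum1 n f.
Proof.
  intros Hrange Hinj. rewrite !sum1_sum_list, <- sum_list_map.
  apply sum_list_perm, NoDup_Permutation_bis.
  - apply NoDup_map_NoDup_ForallPairs; [|apply seq_NoDup].
    intros a b Ha Hb. apply in_seq in Ha, Hb. apply Hinj; lia.
  - rewrite length_map. lia.
  - intros x Hx. apply in_map_iff in Hx as [k [<- Hk]].
    apply in_seq in Hk. apply in_seq. specialize (Hrange k ltac:(lia)). lia.
Qed.

Lemma sin_ge_cubic y : 0 <= y <= PI -> y - y ^ 3 / 6 <= sin y.
Proof.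
  intros Hy. destruct (sin_bound y 0) as [Hs _]; try lra.
  unfold sin_approx, sin_term in Hs; simpl in Hs. lra.
Qed.

Lemma cos_le_quartic y : - PI / 2 <= y <= PI / 2 -> cos y <= 1 - y ^ 2 / 2 + y ^ 4 / 24.
Proof.
  intros Hy. destruct (cos_bound y 0) as [_ Hc]; try lra.
  unfold cos_approx, cos_term in Hc; simpl in Hc. lra.
Qed.

Lemma mul_cos_le_sin y : 0 <= y <= PI / 2 -> y * cos y <= sin y.
Proof.
  intros Hy. pose proof PI_4.
  pose proof (sin_ge_cubic y ltac:(lra)). pose proof (cos_le_quartic y ltac:(lra)).
  assert (y * cos y <= y * (1 - y ^ 2 / 2 + y ^ 4 / 24)) by (apply Rmult_le_compat_l; lra).
  (* the remaining gap y^3/3 - y^5/24 is nonnegative because y^2 <= 8 *)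
  assert (0 <= y ^ 3 * (8 - y ^ 2)) by (apply Rmult_le_pos; [apply pow_le|]; nra).
  nra.
Qed.

Lemma cot_bounds y : 0 < y <= PI / 2 -> 0 <= cot y <= / y.
Proof.
  intros Hy. pose proof PI_RGT_0.
  assert (0 < sin y) by (apply sin_gt_0; lra).
  assert (0 <= cos y) by (apply cos_ge_0; lra).
  pose proof (mul_cos_le_sin y ltac:(lra)).
  unfold cot. split.
  - apply Rmult_le_pos; [lra|left; apply Rinv_0_lt_compat; lra].
  - apply (Rmult_le_reg_l (y * sin y)); [nra|]. field_simplify; lra.
Qed.

Lemma cot_PI_minus x : cot (PI - x) = - cot x.
Proof. unfold cot. rewrite sin_PI_x, Rtrigo_facts.cos_pi_minus. unfold Rdiv. ring. Qed.

Lemma Rabs_cot_le x : 0 < x < PI -> Rabs (cot x) <= / x + / (PI - x).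
Proof.
  intros Hx.
  assert (0 < / x) by (apply Rinv_0_lt_compat; lra).
  assert (0 < / (PI - x)) by (apply Rinv_0_lt_compat; lra).
  destruct (Rle_dec x (PI / 2)).
  - destruct (cot_bounds x) as [Hpos Hle]; [lra|].
    rewrite Rabs_right; lra.
  - destruct (cot_bounds (PI - x)) as [Hpos Hle]; [lra|].
    rewrite cot_PI_minus in Hpos, Hle.
    rewrite Rabs_left1; lra.
Qed.

Lemma cot_add_PI x : cot (x + PI) = cot x.
Proof. unfold cot. rewrite neg_sin, neg_cos. unfold Rdiv. rewrite Rinv_opp. ring. Qed.

Lemma cot_add_mul_PI x q : cot (x + INR q * PI) = cot x.
Proof.
  induction q as [|q IH].
  - rewrite Rmult_0_l, Rplus_0_r. reflexivity.
  - rewrite <- IH, <- (cot_add_PI (x + INR q * PI)), S_INR. f_equal. ring.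
Qed.

Lemma cot_PI_mul_mod m N :
  (0 < N)%nat -> cot (PI * INR m / INR N) = cot (PI * INR (m mod N) / INR N).
Proof.
  intros HN.
  assert (0 < INR N) by (apply lt_0_INR; lia).
  rewrite (Nat.div_mod_eq m N) at 1.
  rewrite plus_INR, mult_INR, <- (cot_add_mul_PI (PI * INR (m mod N) / INR N) (m / N)).
  f_equal. field. lra.
Qed.

Lemma mul_mod_prime_neq0 N a b :
  prime (Z.of_nat N) -> (0 < a < N)%nat -> (0 < b < N)%nat -> ((a * b) mod N <> 0)%nat.
Proof.
  intros Hp Ha Hb Hmod.
  apply Nat.Div0.mod_divides in Hmod as [c Hc].
  assert (Hdiv : (Z.of_nat N | Z.of_nat a * Z.of_nat b)%Z) by (exists (Z.of_nat c); lia).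
  destruct (prime_mult _ Hp _ _ Hdiv) as [[d Hd]|[d Hd]];
    clear - Hd Ha Hb; destruct (Z.lt_total d 0) as [|[|]]; subst; nia.
Qed.

Lemma mul_mod_prime_inj N h a b :
  prime (Z.of_nat N) -> (0 < h < N)%nat -> (a < N)%nat -> (b < N)%nat ->
  ((h * a) mod N = (h * b) mod N)%nat -> a = b.
Proof.
  intros Hp Hh Ha Hb Hmod.
  pose proof (Nat.div_mod_eq (h * a) N). pose proof (Nat.div_mod_eq (h * b) N).
  assert (Hdiv : (Z.of_nat N | Z.of_nat h * (Z.of_nat a - Z.of_nat b))%Z)
    by (exists (Z.of_nat (h * a / N) - Z.of_nat (h * b / N))%Z; nia).
  destruct (prime_mult _ Hp _ _ Hdiv) as [[d Hd]|[d Hd]];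
    clear - Hd Hh Ha Hb; destruct (Z.lt_total d 0) as [|[|]]; subst; nia.
Qed.

Definition cot_sum (N : nat) : R :=
  sum1 (N - 1) (fun r => Rabs (cot (PI * INR r / INR N))).

Lemma sum_abs_cot_mul N h :
  prime (Z.of_nat N) -> (0 < h < N)%nat ->
  sum1 (N - 1) (fun w => Rabs (cot (PI * INR h * INR w / INR N))) = cot_sum N.
Proof.
  intros Hp Hh. unfold cot_sum.
  rewrite <- (sum1_reindex (N - 1) (fun w => (h * w) mod N)%nat
                (fun r => Rabs (cot (PI * INR r / INR N)))).
  - apply sum1_ext. intros w Hw.
    rewrite Rmult_assoc, <- mult_INR, cot_PI_mul_mod by lia. reflexivity.
  - intros w Hw. pose proof (mul_mod_prime_neq0 N h w Hp ltac:(lia) ltac:(lia)).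
    pose proof (Nat.mod_upper_bound (h * w) N ltac:(lia)). lia.
  - intros a b Ha Hb. apply (mul_mod_prime_inj N h); auto; lia.
Qed.

Lemma sum_sum_abs_cot_div N :
  prime (Z.of_nat N) ->
  sum1 (N - 1) (fun w =>
    / INR N * sum1 (N - 1) (fun h => Rabs (cot (PI * INR h * INR w / INR N)) / INR h))
  = / INR N * (cot_sum N * harmonic (N - 1)).
Proof.
  intros Hp.
  rewrite sum1_scal_l, sum1_comm. f_equal.
  unfold harmonic. rewrite <- sum1_scal_l. apply sum1_ext. intros h Hh.
  rewrite <- (sum_abs_cot_mul N h) by (auto; lia).
  rewrite (Rmult_comm (sum1 _ _)), <- sum1_scal_l.
  apply sum1_ext. intros. unfold Rdiv. ring.
Qed.

Lemma cot_sum_le N : (1 < N)%nat -> cot_sum N <= 2 * INR N / PI * harmonic (N - 1).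
Proof.
  intros HN. unfold cot_sum. pose proof PI_RGT_0.
  assert (0 < INR N) by (apply lt_0_INR; lia).
  apply Rle_trans with
    (sum1 (N - 1) (fun r => INR N / PI * (/ INR r + / INR (N - r)))).
  - apply sum1_le. intros r Hr.
    assert (1 <= INR r) by (apply (le_INR 1); lia).
    assert (INR r + 1 <= INR N) by (rewrite <- S_INR; apply le_INR; lia).
    assert (Hx : 0 < PI * INR r / INR N < PI).
    { split; [apply Rdiv_lt_0_compat; nra|].
      apply (Rmult_lt_reg_r (INR N)); [lra|].
      unfold Rdiv. rewrite Rmult_assoc, Rinv_l by lra. nra. }
    eapply Rle_trans; [apply Rabs_cot_le, Hx|].
    rewrite minus_INR by lia. right. field. repeat split; nra.
  - rewrite sum1_scal_l, sum1_add.
    rewrite (sum1_reindex (N - 1) (fun r => N - r)%nat (fun k => / INR k)) by lia.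
    unfold harmonic. right. field. lra.
Qed.

Lemma inv_add1_le_ln_diff x : 0 < x -> / (x + 1) <= ln (x + 1) - ln x.
Proof.
  intros Hx. pose proof (exp_ineq1_le (ln x - ln (x + 1))) as Hexp.
  unfold Rminus in Hexp.
  rewrite exp_plus, exp_Ropp, !exp_ln in Hexp by lra.
  replace (/ (x + 1)) with (1 - x * / (x + 1)) by (field; lra). lra.
Qed.

Lemma ln_le_compat x y : 0 < x -> x <= y -> ln x <= ln y.
Proof.
  intros Hx [Hlt|<-]; [left; apply ln_increasing|right]; auto.
Qed.

Lemma harmonic_ge0 n : 0 <= harmonic n.
Proof.
  induction n as [|n IH]; [unfold harmonic; simpl; lra|].
  change (harmonic (S n)) with (harmonic n + / INR (S n)).
  assert (0 < / INR (S n)) by (apply Rinv_0_lt_compat, lt_0_INR; lia).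
  lra.
Qed.

Lemma harmonic_le_1_add_ln n : (1 <= n)%nat -> harmonic n <= 1 + ln (INR n).
Proof.
  induction n as [|n IH]; intros Hn; [lia|].
  destruct (Nat.eq_dec n 0) as [->|Hn0].
  - unfold harmonic; simpl. rewrite ln_1. lra.
  - change (harmonic (S n)) with (harmonic n + / INR (S n)).
    assert (0 < INR n) by (apply lt_0_INR; lia).
    assert (Hstep : / INR (S n) <= ln (INR (S n)) - ln (INR n))
      by (rewrite S_INR; apply inv_add1_le_ln_diff; lra).
    specialize (IH ltac:(lia)). lra.
Qed.

Lemma mul_harmonic_pred_le N :
  (3 <= N)%nat -> INR N * harmonic (N - 1) <= 3 * INR (N - 1) * ln (INR N).
Proof.
  intros HN.
  assert (H3 : 3 <= INR N) by (replace 3 with (INR 3) by (simpl; ring); apply le_INR; lia).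
  rewrite minus_INR by lia. simpl INR.
  assert (Hln : 1 <= ln (INR N)).
  { rewrite <- (ln_exp 1). apply ln_le_compat; [apply exp_pos|].
    pose proof exp_le_3. lra. }
  assert (Hharm : harmonic (N - 1) <= 1 + ln (INR N)).
  { eapply Rle_trans; [apply harmonic_le_1_add_ln; lia|].
    apply Rplus_le_compat_l, ln_le_compat; [apply lt_0_INR; lia|apply le_INR; lia]. }
  (* 3 (N-1) L - N (1 + L) = (2N - 3)(L - 1) + N - 3 *)
  nra.
Qed.

Theorem lemma4 (N : nat) (hprime : prime (Z.of_nat N)) (hN : (3 <= N)%nat) :
  / INR (N - 1) *
    sum1 (N - 1) (fun w =>
      / INR N * sum1 (N - 1) (fun h =>
        Rabs (cot (PI * INR h * INR w / INR N)) / INR h))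
  <= harmonic (N - 1) / INR N * (6 / PI) * ln (INR N).
Proof.
  rewrite sum_sum_abs_cot_div by exact hprime.
  set (S := cot_sum N). set (H := harmonic (N - 1)). set (L := ln (INR N)).
  pose proof PI_RGT_0.
  assert (0 < INR N) by (apply lt_0_INR; lia).
  assert (0 < INR (N - 1)) by (apply lt_0_INR; lia).
  assert (HS : S <= 2 * INR N / PI * H) by (apply cot_sum_le; lia).
  assert (HH : 0 <= H) by apply harmonic_ge0.
  assert (HNH : INR N * H <= 3 * INR (N - 1) * L) by (apply mul_harmonic_pred_le; lia).
  assert (HSH : S * H <= 2 / PI * H * (3 * INR (N - 1) * L)).
  { apply Rle_trans with (2 / PI * H * (INR N * H)).
    - apply Rle_trans with (2 * INR N / PI * H * H); [apply Rmult_le_compat_r; lra|].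
      right. field. lra.
    - apply Rmult_le_compat_l; [apply Rmult_le_pos; [apply Rlt_le, Rdiv_lt_0_compat|]|]; lra. }
  replace (H / INR N * (6 / PI) * L)
    with (/ INR (N - 1) * (/ INR N * (2 / PI * H * (3 * INR (N - 1) * L)))) by (field; lra).
  repeat (apply Rmult_le_compat_l; [apply Rlt_le, Rinv_0_lt_compat; lra|]).
  exact HSH.
Qed.
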